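(* Let $z\in\mathbb{R}^n$ be a unit vector and $H$ a real symmetric $n\times n$ matrix, and set $H_+=(I-zz^T)H(I-zz^T)+zz^T$. Then $\operatorname{trace}\big((H_+-I)(H_+-H)\big)=0$; consequently $$\|(H-I)z\|^2\le \|H-I\|^2-\|H_+-I\|^2;$$ and furthermore $\lambda_{\min}(H_+)\ge\min\{\lambda_{\min}(H),1\}$.
   Context: For vectors, $\|\cdot\|$ is the Euclidean norm; for symmetric matrices, $\|\cdot\|$ is the norm induced by the inner product $\langle X,Y\rangle=\operatorname{trace}(XY)$ (the Frobenius norm). $\lambda_{\min}(H)$ denotes the smallest eigenvalue of $H$. *)

From HB Require Import structures.
From mathcomp Require Import all_boot all_order all_algebra.
From mathcomp Require Import classical_sets reals.
Set Implicit Arguments. Unset Strict Implicit. Unset Printing Implicit Defensive.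
Import Order.TTheory GRing.Theory Num.Theory.
Local Open Scope ring_scope.

Definition vnorm (R : realType) (n : nat) (v : 'cV[R]_n) : R :=
  Num.sqrt (\sum_(i < n) v i 0 ^+ 2).

Definition minner (R : realType) (n : nat) (X Y : 'M[R]_n) : R := \tr (X *m Y).
Definition mnorm (R : realType) (n : nat) (X : 'M[R]_n) : R :=
  Num.sqrt (minner X X).

Definition lambda_min (R : realType) (n : nat) (H : 'M[R]_n) : R :=
  inf [set a : R | eigenvalue H a].

Definition Hplus (R : realType) (n : nat) (z : 'cV[R]_n) (H : 'M[R]_n) : 'M[R]_n :=
  (1%:M - z *m z^T) *m H *m (1%:M - z *m z^T) + z *m z^T.

From HB Require Import structures.
From mathcomp Require Import all_boot all_order all_algebra.
From mathcomp Require Import classical_sets reals.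
From mathcomp Require Import ring lra.
Import Order.TTheory GRing.Theory Num.Theory.
Local Open Scope ring_scope.
Set Implicit Arguments. Unset Strict Implicit. Unset Printing Implicit Defensive.

(* With P = I - z z^T the orthogonal projection onto z^perp, one has
   H_+ - I = P (H - I) P, and everything follows from P^2 = P:
   - the orthogonality is tr(X X) = tr(X A) for X = P A P, A = H - I;
   - ||A||^2 - ||P A P||^2 = 2 ||A z||^2 - (z^T A z)^2 >= ||A z||^2 by
     Cauchy-Schwarz;
   - H_+ z = z, and every eigenvector of H_+ for an eigenvalue other than 1 is
     orthogonal to z, so its Rayleigh quotients for H_+ and H coincide.
   The smallest eigenvalue of a symmetric matrix is the minimum of its Rayleigh
   quotient: at the infimum m, invertibility of the positive semidefinite
   S - m I would push the Rayleigh quotient of S uniformly above m. *)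

Section ColumnDot.
Variables (R : realType) (n : nat).
Implicit Types (u v w : 'cV[R]_n) (A B M S : 'M[R]_n).

Definition vdot u v : R := \sum_i u i 0 * v i 0.

Lemma vdotE u v : (u^T *m v) 0 0 = vdot u v.
Proof. by rewrite mxE; apply: eq_bigr => i _; rewrite mxE. Qed.

Lemma trmx_mul_vdot u v : u^T *m v = (vdot u v)%:M.
Proof. by apply/matrixP => i j; rewrite !ord1 -vdotE [RHS]mxE eqxx mulr1n. Qed.

Lemma vdotC u v : vdot u v = vdot v u.
Proof. by apply: eq_bigr => i _; rewrite mulrC. Qed.

Lemma vdot_mulmxr M u v : vdot u (M *m v) = vdot (M^T *m u) v.
Proof. by rewrite -!vdotE trmx_mul trmxK mulmxA. Qed.

Lemma vdotDl u v w : vdot (u + v) w = vdot u w + vdot v w.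
Proof.
by rewrite /vdot -big_split; apply: eq_bigr => i _; rewrite mxE mulrDl.
Qed.

Lemma vdotZl a u v : vdot (a *: u) v = a * vdot u v.
Proof.
by rewrite /vdot mulr_sumr; apply: eq_bigr => i _; rewrite mxE mulrA.
Qed.

Lemma vdotDr u v w : vdot u (v + w) = vdot u v + vdot u w.
Proof. by rewrite vdotC vdotDl !(vdotC u). Qed.

Lemma vdotZr a u v : vdot u (a *: v) = a * vdot u v.
Proof. by rewrite vdotC vdotZl vdotC. Qed.

Lemma vdot0l v : vdot 0 v = 0.
Proof. by rewrite /vdot big1 // => i _; rewrite mxE mul0r. Qed.

Lemma sqr_coord_le_vdot v i : v i 0 ^+ 2 <= vdot v v.
Proof.
rewrite /vdot (bigD1 i) //= -expr2 lerDl.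
by apply: sumr_ge0 => j _; rewrite -expr2 sqr_ge0.
Qed.

Lemma vdot_ge0 v : 0 <= vdot v v.
Proof. by apply: sumr_ge0 => i _; rewrite -expr2 sqr_ge0. Qed.

Lemma vdot_gt0 v : v != 0 -> 0 < vdot v v.
Proof.
apply: contraR; rewrite -leNgt => v_le0; apply/eqP/matrixP => i j.
rewrite ord1 mxE; apply/eqP; rewrite -sqrf_eq0 eq_le sqr_ge0 andbT.
exact: le_trans (sqr_coord_le_vdot v i) v_le0.
Qed.

Lemma vnorm_sqr v : vnorm v ^+ 2 = vdot v v.
Proof.
rewrite /vnorm sqr_sqrtr; last by apply: sumr_ge0 => i _; rewrite sqr_ge0.
by apply: eq_bigr => i _; rewrite expr2.
Qed.

Lemma mxtrace_outer u v : \tr (u *m v^T) = vdot u v.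
Proof. by apply: eq_bigr => i _; rewrite mxE big_ord1 mxE. Qed.

Lemma mnorm_sqr M : M^T = M -> mnorm M ^+ 2 = \tr (M *m M).
Proof.
move=> M_sym; rewrite /mnorm /minner sqr_sqrtr // -{1}M_sym.
apply: sumr_ge0 => i _; rewrite mxE; apply: sumr_ge0 => j _.
by rewrite mxE -expr2 sqr_ge0.
Qed.

Lemma quadratic_ge0_discr (a b c : R) :
  0 <= c -> (forall t, 0 <= a + 2 * t * b + t ^+ 2 * c) -> b ^+ 2 <= a * c.
Proof.
rewrite le_eqVlt => /orP[/eqP c0 | c_gt0] q_ge0; last first.
  have := q_ge0 (- b / c).
  have : - b / c * c = - b by field; rewrite gt_eqF.
  nra.
rewrite -c0 mulr0; have [-> | b_neq0] := eqVneq b 0.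
  by rewrite expr2 mulr0.
have := q_ge0 (- (a + 1) / (2 * b)); rewrite -c0 mulr0 addr0.
have -> : 2 * (- (a + 1) / (2 * b)) * b = - (a + 1) by field.
lra.
Qed.

Lemma psd_cauchy_schwarz A : A^T = A -> (forall x, 0 <= vdot x (A *m x)) ->
  forall x y, vdot x (A *m y) ^+ 2 <= vdot x (A *m x) * vdot y (A *m y).
Proof.
move=> A_sym A_psd x y; apply: quadratic_ge0_discr => // t.
have -> : vdot x (A *m x) + 2 * t * vdot x (A *m y) + t ^+ 2 * vdot y (A *m y)
    = vdot (x + t *: y) (A *m (x + t *: y)).
  have yAx : vdot y (A *m x) = vdot x (A *m y).
    by rewrite vdot_mulmxr A_sym vdotC.
  by rewrite mulmxDr -scalemxAr !vdotDl !vdotDr !vdotZl !vdotZr yAx; ring.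
exact: A_psd.
Qed.

Lemma vdot_cauchy_schwarz u v : vdot u v ^+ 2 <= vdot u u * vdot v v.
Proof.
have := @psd_cauchy_schwarz 1%:M (trmx1 _ _) _ u v; rewrite !mul1mx; apply.
by move=> x; rewrite mul1mx vdot_ge0.
Qed.

Lemma quad_form_bound B v :
  `|vdot v (B *m v)| <= (\sum_i \sum_j `|B i j|) * vdot v v.
Proof.
have -> : vdot v (B *m v) = \sum_i \sum_j B i j * (v i 0 * v j 0).
  apply: eq_bigr => i _; rewrite mxE mulr_sumr.
  by apply: eq_bigr => j _; rewrite mulrCA.
rewrite mulr_suml; apply: le_trans (ler_norm_sum _ _ _) _.
apply: ler_sum => i _; rewrite mulr_suml.
apply: le_trans (ler_norm_sum _ _ _) _.
apply: ler_sum => j _; rewrite normrM ler_wpM2l // normrM.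
have := sqr_coord_le_vdot v i; have := sqr_coord_le_vdot v j.
rewrite -(real_normK (num_real (v i 0))) -(real_normK (num_real (v j 0))).
have := normr_ge0 (v i 0); have := normr_ge0 (v j 0).
nra.
Qed.

(* The bound comes from Cauchy-Schwarz for A applied to v and A^-1 v. *)
Lemma psd_unit_coercive A : A^T = A -> (forall x, 0 <= vdot x (A *m x)) ->
  A \in unitmx -> exists2 c, 0 < c & forall v, vdot v v <= c * vdot v (A *m v).
Proof.
move=> A_sym A_psd A_unit; pose B := invmx A.
exists (1 + \sum_i \sum_j `|B i j|) => [|v].
  by rewrite ltr_pwDl // sumr_ge0 // => i _; rewrite sumr_ge0.
set c := \sum_i _.
have c_ge0 : 0 <= c by rewrite sumr_ge0 // => i _; rewrite sumr_ge0.
have := psd_cauchy_schwarz A_sym A_psd v (B *m v).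
rewrite mulmxA mulmxV // mul1mx (vdotC (B *m v)) => CS.
have vBv_le := le_trans (ler_norm _) (quad_form_bound B v).
have vAv_ge0 := A_psd v.
have vv_le : vdot v v * vdot v v <= vdot v (A *m v) * ((1 + c) * vdot v v).
  rewrite -expr2; apply: (le_trans CS); rewrite ler_wpM2l //.
  by apply: le_trans vBv_le _; rewrite ler_wpM2r ?vdot_ge0 // lerDr.
have [v0 | vv_neq0] := eqVneq (vdot v v) 0.
  by rewrite v0 mulr_ge0 ?addr_ge0.
have vv_gt0 : 0 < vdot v v by rewrite lt_def vv_neq0 vdot_ge0.
by rewrite -(ler_pM2r vv_gt0) (mulrC (1 + c)) -mulrA.
Qed.

Lemma sym_eigenvectorP S l : S^T = S -> eigenvalue S l ->
  exists2 v : 'cV[R]_n, v != 0 & S *m v = l *: v.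
Proof.
move=> S_sym /eigenvalueP [w w_eigen w_neq0]; exists w^T.
  by apply: contra w_neq0 => /eqP w0; rewrite -[w]trmxK w0 trmx0.
by rewrite -{1}S_sym -trmx_mul w_eigen linearZ.
Qed.

Lemma eigenvalue_ge S c l : S^T = S ->
  (forall v, c * vdot v v <= vdot v (S *m v)) -> eigenvalue S l -> c <= l.
Proof.
move=> S_sym S_ge /(sym_eigenvectorP S_sym) [v v_neq0 v_eigen].
by have := S_ge v; rewrite v_eigen vdotZr ler_pM2r // vdot_gt0.
Qed.

Local Open Scope classical_set_scope.

Lemma rayleigh_min_eigenvalue S : (0 < n)%N -> S^T = S ->
  exists2 l, eigenvalue S l & forall v, l * vdot v v <= vdot v (S *m v).
Proof.
move=> n_gt0 S_sym.
pose Q := [set vdot v (S *m v) / vdot v v | v in [set v | v != 0]].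
pose one : 'cV[R]_n := const_mx 1.
have one_neq0 : one != 0.
  by apply/eqP => /matrixP /(_ (Ordinal n_gt0) 0) /eqP; rewrite !mxE oner_eq0.
have Q_lb : has_lbound Q.
  exists (- \sum_i \sum_j `|S i j|) => _ [v /= v_neq0 <-].
  rewrite ler_pdivlMr ?vdot_gt0 // mulNr lerNl.
  by apply: le_trans (quad_form_bound S v); rewrite -normrN ler_norm.
pose m := inf Q.
have m_lb v : m * vdot v v <= vdot v (S *m v).
  have [-> | v_neq0] := eqVneq v 0; first by rewrite !vdot0l mulr0.
  by rewrite -ler_pdivlMr ?vdot_gt0 //; apply: ge_inf => //; exists v.
exists m => //.
rewrite /eigenvalue /eigenspace kermx_eq0 row_free_unit; apply/negP => unitA.
pose A := S - m%:M.
have A_sym : A^T = A by rewrite /A linearB /= tr_scalar_mx S_sym.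
have A_quad x : vdot x (A *m x) = vdot x (S *m x) - m * vdot x x.
  by rewrite /A mulmxBl mul_scalar_mx vdotDr -scaleNr vdotZr mulNr.
have A_psd x : 0 <= vdot x (A *m x) by rewrite A_quad subr_ge0.
have [c c_gt0 A_coercive] := psd_unit_coercive A_sym A_psd unitA.
suff : m + c^-1 <= m by rewrite gerDl leNgt invr_gt0 c_gt0.
apply: lb_le_inf; first by exists (vdot one (S *m one) / vdot one one), one.
move=> _ [v /= v_neq0 <-]; rewrite ler_pdivlMr ?vdot_gt0 // mulrDl.
by rewrite -lerBrDl -A_quad ler_pdivrMl // A_coercive.
Qed.

Lemma lambda_min_rayleigh S : (0 < n)%N -> S^T = S ->
  forall v, lambda_min S * vdot v v <= vdot v (S *m v).
Proof.
move=> n_gt0 S_sym v.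
have [l l_eigen l_min] := rayleigh_min_eigenvalue n_gt0 S_sym.
apply: le_trans (l_min v); rewrite ler_wpM2r ?vdot_ge0 //.
apply: ge_inf l_eigen; exists l => l' /=; exact: eigenvalue_ge.
Qed.

Lemma lambda_min_ge S c : (0 < n)%N -> S^T = S ->
  (forall l, eigenvalue S l -> c <= l) -> c <= lambda_min S.
Proof.
move=> n_gt0 S_sym c_lb; apply: lb_le_inf => //.
by have [l l_eigen _] := rayleigh_min_eigenvalue n_gt0 S_sym; exists l.
Qed.

End ColumnDot.

Lemma mxtrace_compress_sqr (R : comPzRingType) n (P A : 'M[R]_n) : P *m P = P ->
  \tr (P *m A *m P *m (P *m A *m P)) = \tr (P *m A *m P *m A).
Proof.
move=> P_idem; rewrite !mulmxA -(mulmxA _ P P) P_idem mxtrace_mulC.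
by rewrite !mulmxA P_idem.
Qed.

Section RankOneProjection.
Variables (R : realType) (n : nat) (z : 'cV[R]_n).
Hypothesis z_unit : vdot z z = 1.
Implicit Types (v : 'cV[R]_n) (A H : 'M[R]_n).

Local Notation Q := (z *m z^T).
Local Notation P := (1%:M - z *m z^T).

Lemma dim_gt0 : (0 < n)%N.
Proof.
rewrite lt0n; apply/eqP => n0; move: z_unit; rewrite /vdot big1 => [/eqP|].
  by rewrite eq_sym oner_eq0.
by move=> i; have := ltn_ord i; rewrite {2}n0.
Qed.

Lemma trmx_mulzz : z^T *m z = 1%:M.
Proof. by rewrite trmx_mul_vdot z_unit. Qed.

Lemma proj_mulz : P *m z = 0.
Proof. by rewrite mulmxBl mul1mx -mulmxA trmx_mulzz mulmx1 subrr. Qed.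

Lemma proj_idem : P *m P = P.
Proof. by rewrite mulmxBr mulmx1 mulmxA proj_mulz mul0mx subr0. Qed.

Lemma proj_sym : P^T = P.
Proof. by rewrite linearB /= trmx1 trmx_mul trmxK. Qed.

Lemma Hplus_sub1 H : Hplus z H - 1%:M = P *m (H - 1%:M) *m P.
Proof.
by rewrite [P *m (H - 1%:M)]mulmxBr mulmx1 mulmxBl proj_idem opprB addrA.
Qed.

Lemma Hplus_mulz H : Hplus z H *m z = z.
Proof.
rewrite /Hplus [(_ + _) *m z]mulmxDl -(mulmxA _ P z) proj_mulz mulmx0 add0r.
by rewrite -mulmxA trmx_mulzz mulmx1.
Qed.

Lemma Hplus_sym H : H^T = H -> (Hplus z H)^T = Hplus z H.
Proof.
move=> H_sym; rewrite /Hplus linearD /= !trmx_mul proj_sym H_sym.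
by rewrite trmxK mulmxA.
Qed.

Lemma Hplus_quad_orth H v :
  vdot z v = 0 -> vdot v (Hplus z H *m v) = vdot v (H *m v).
Proof.
move=> zv0; have Qv : Q *m v = 0.
  by rewrite -mulmxA trmx_mul_vdot zv0 mul_mx_scalar scale0r.
have Pv : P *m v = v by rewrite mulmxBl mul1mx Qv subr0.
rewrite /Hplus [(_ + _) *m v]mulmxDl Qv addr0 -(mulmxA _ P v) Pv.
by rewrite -mulmxA (vdot_mulmxr P) proj_sym Pv.
Qed.

Lemma mxtrace_sqr_sub_compress A : A^T = A ->
  \tr (A *m A) - \tr (P *m A *m P *m (P *m A *m P))
  = 2 * vdot (A *m z) (A *m z) - vdot z (A *m z) ^+ 2.
Proof.
move=> A_sym; rewrite mxtrace_compress_sqr ?proj_idem //.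
set a := A *m z.
have QA : Q *m A = z *m a^T by rewrite -mulmxA trmx_mul A_sym.
have QAA : \tr (Q *m A *m A) = vdot a a.
  by rewrite QA mxtrace_mulC mulmxA -/a mxtrace_outer.
have AQA : \tr (A *m Q *m A) = vdot a a by rewrite -mulmxA mxtrace_mulC QAA.
have QAQA : \tr (Q *m A *m Q *m A) = vdot z a ^+ 2.
  rewrite -mulmxA QA mulmxA -(mulmxA z) trmx_mul_vdot mul_mx_scalar -scalemxAl.
  by rewrite mxtraceZ mxtrace_outer (vdotC a) expr2.
rewrite !mulmxBl !mul1mx !mulmxBr !mulmx1 !mulmxBl !raddfB /=.
by rewrite QAA AQA QAQA; ring.
Qed.

Lemma Hplus_trace_orth H : \tr ((Hplus z H - 1%:M) *m (Hplus z H - H)) = 0.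
Proof.
have -> : Hplus z H - H = (Hplus z H - 1%:M) - (H - 1%:M).
  by rewrite opprB addrA subrK.
rewrite Hplus_sub1 mulmxBr mxtraceD raddfN /=.
by rewrite mxtrace_compress_sqr ?proj_idem ?subrr.
Qed.

Lemma Hplus_dist_decrease H : H^T = H ->
  vnorm ((H - 1%:M) *m z) ^+ 2
    <= mnorm (H - 1%:M) ^+ 2 - mnorm (Hplus z H - 1%:M) ^+ 2.
Proof.
move=> H_sym; set A := H - 1%:M.
have A_sym : A^T = A by rewrite /A linearB /= trmx1 H_sym.
have PAP_sym : (P *m A *m P)^T = P *m A *m P.
  by rewrite !trmx_mul proj_sym A_sym mulmxA.
rewrite Hplus_sub1 -/A vnorm_sqr !mnorm_sqr // mxtrace_sqr_sub_compress //.
have := vdot_cauchy_schwarz z (A *m z); rewrite z_unit mul1r.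
lra.
Qed.

Lemma Hplus_lambda_min H : H^T = H ->
  Num.min (lambda_min H) 1 <= lambda_min (Hplus z H).
Proof.
move=> H_sym; apply: lambda_min_ge dim_gt0 (Hplus_sym H_sym) _ => mu mu_eigen.
have [v v_neq0 v_eigen] := sym_eigenvectorP (Hplus_sym H_sym) mu_eigen.
rewrite ge_min; have [-> | mu_neq1] := eqVneq mu 1; first by rewrite lexx orbT.
have zv0 : vdot z v = 0.
  have zv_eigen : mu * vdot z v = vdot z v.
    by rewrite -vdotZr -v_eigen vdot_mulmxr Hplus_sym // Hplus_mulz.
  have : (mu - 1) * vdot z v = 0 by rewrite mulrBl mul1r zv_eigen subrr.
  by move/eqP; rewrite mulf_eq0 subr_eq0 (negbTE mu_neq1) => /eqP.
have := lambda_min_rayleigh dim_gt0 H_sym v.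
by rewrite -Hplus_quad_orth // v_eigen vdotZr ler_pM2r ?vdot_gt0 // => ->.
Qed.

End RankOneProjection.

Theorem mainTheorem3 (R : realType) (n : nat) (z : 'cV[R]_n) (H : 'M[R]_n)
  (hz : vnorm z = 1) (hH : H^T = H) :
  \tr ((Hplus z H - 1%:M) *m (Hplus z H - H)) = 0
  /\ vnorm ((H - 1%:M) *m z) ^+ 2 <= mnorm (H - 1%:M) ^+ 2 - mnorm (Hplus z H - 1%:M) ^+ 2
  /\ Num.min (lambda_min H) 1 <= lambda_min (Hplus z H).
Proof.
have z_unit : vdot z z = 1 by rewrite -vnorm_sqr hz expr1n.
split; first exact: Hplus_trace_orth.
split; first exact: Hplus_dist_decrease.
exact: Hplus_lambda_min.
Qed.
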